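(* Let $\mathcal{H}$ be an infinite-dimensional separable complex Hilbert space, let $A:\mathcal{H}\to\mathcal{H}$ be compact and injective, let $g\in\mathrm{ran}A$, and let $f\in\mathcal{H}$ be the unique vector with $Af=g$. Let $(u_n)_{n\in\mathbb{N}}$ and $(v_n)_{n\in\mathbb{N}}$ be orthonormal bases of $\mathcal{H}$, and let $A_N$, $g_N$ and $\widehat{x}$ be as in the context. Let $(f^{(N)})_{N\in\mathbb{N}}$ be a sequence with $f^{(N)}\in\mathbb{C}^N$ such that, writing $\varepsilon^{(N)}:=A_Nf^{(N)}-g_N\in\mathbb{C}^N$, one has $\|\varepsilon^{(N)}\|_{\mathbb{C}^N}\to0$ as $N\to\infty$. Assume moreover that $\sup_{N}\|\widehat{f^{(N)}}\|_{\mathcal{H}}<\infty$. Then, as $N\to\infty$, \[\|g-A\widehat{f^{(N)}}\|_{\mathcal{H}}\to0\qquad\text{and}\qquad f-\widehat{f^{(N)}}\rightharpoonup0\ \text{(weakly in }\mathcal{H}).\]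
   Context: For orthonormal bases $(u_n)$, $(v_n)$ of $\mathcal{H}$ and $N\in\mathbb{N}$: $A_N$ is the $N\times N$ matrix with entries $(A_N)_{ij}=\langle v_i,Au_j\rangle$ for $i,j\in\{1,\dots,N\}$; $g_N=(\langle v_1,g\rangle,\dots,\langle v_N,g\rangle)\in\mathbb{C}^N$; and for $x=(x_1,\dots,x_N)\in\mathbb{C}^N$, $\widehat{x}:=\sum_{n=1}^Nx_nu_n\in\mathcal{H}$. The inner product is antilinear in the first entry. Weak convergence $\xi_N\rightharpoonup\xi$ means $\langle\eta,\xi_N\rangle\to\langle\eta,\xi\rangle$ for every $\eta\in\mathcal{H}$. *)

From Stdlib Require Import Reals Lra.
Open Scope R_scope.

Record Cplx : Type := mkC { Re : R; Im : R }.
Definition C0 : Cplx := mkC 0 0.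
Definition C1 : Cplx := mkC 1 0.
Definition Cadd (a b : Cplx) : Cplx := mkC (Re a + Re b) (Im a + Im b).
Definition Copp (a : Cplx) : Cplx := mkC (- Re a) (- Im a).
Definition Csub (a b : Cplx) : Cplx := Cadd a (Copp b).
Definition Cmul (a b : Cplx) : Cplx :=
  mkC (Re a * Re b - Im a * Im b) (Re a * Im b + Im a * Re b).
Definition Cconj (a : Cplx) : Cplx := mkC (Re a) (- Im a).
Definition Cmod (a : Cplx) : R := sqrt (Re a ^ 2 + Im a ^ 2).

Fixpoint Csum (N : nat) (F : nat -> Cplx) : Cplx :=
  match N with O => C0 | S n => Cadd (Csum n F) (F n) end.

(* Inner product antilinear in the first entry, linear in the second. *)
Record HilbertSpace (X : Type) : Type := {
  hadd : X -> X -> X;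
  hzero : X;
  hopp : X -> X;
  hscal : Cplx -> X -> X;
  hinner : X -> X -> Cplx;
  hadd_assoc : forall x y z, hadd x (hadd y z) = hadd (hadd x y) z;
  hadd_comm : forall x y, hadd x y = hadd y x;
  hadd_0 : forall x, hadd x hzero = x;
  hadd_opp : forall x, hadd x (hopp x) = hzero;
  hscal_assoc : forall a b x, hscal a (hscal b x) = hscal (Cmul a b) x;
  hscal_1 : forall x, hscal C1 x = x;
  hscal_distr_l : forall a x y, hscal a (hadd x y) = hadd (hscal a x) (hscal a y);
  hscal_distr_r : forall a b x, hscal (Cadd a b) x = hadd (hscal a x) (hscal b x);
  hinner_conj : forall x y, hinner x y = Cconj (hinner y x);
  hinner_add_r : forall x y z, hinner x (hadd y z) = Cadd (hinner x y) (hinner x z);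
  hinner_scal_r : forall a x y, hinner x (hscal a y) = Cmul a (hinner x y);
  hinner_pos : forall x, Im (hinner x x) = 0 /\ 0 <= Re (hinner x x);
  hinner_def : forall x, hinner x x = C0 -> x = hzero;
  hcomplete : forall u : nat -> X,
    (forall eps, eps > 0 -> exists M, forall m n, (m >= M)%nat -> (n >= M)%nat ->
       sqrt (Re (hinner (hadd (u m) (hopp (u n))) (hadd (u m) (hopp (u n))))) < eps) ->
    exists l, forall eps, eps > 0 -> exists M, forall n, (n >= M)%nat ->
       sqrt (Re (hinner (hadd (u n) (hopp l)) (hadd (u n) (hopp l)))) < eps
}.

Arguments hadd {X} h.
Arguments hzero {X} h.
Arguments hopp {X} h.
Arguments hscal {X} h.
Arguments hinner {X} h.

Section Ops.
Context {X : Type} (HX : HilbertSpace X).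

Definition hsub (x y : X) : X := hadd HX x (hopp HX y).
Definition hnorm (x : X) : R := sqrt (Re (hinner HX x x)).

Fixpoint hsum (N : nat) (F : nat -> X) : X :=
  match N with O => hzero HX | S n => hadd HX (hsum n F) (F n) end.

Definition separable : Prop :=
  exists D : nat -> X, forall x eps, eps > 0 -> exists n, hnorm (hsub x (D n)) < eps.

Definition infinite_dimensional : Prop :=
  forall (n : nat) (e : nat -> X), exists x,
    forall c : nat -> Cplx, x <> hsum n (fun i => hscal HX (c i) (e i)).

Definition is_linear (A : X -> X) : Prop :=
  (forall x y, A (hadd HX x y) = hadd HX (A x) (A y)) /\
  (forall a x, A (hscal HX a x) = hscal HX a (A x)).

Definition compact_operator (A : X -> X) : Prop :=
  is_linear A /\
  forall x : nat -> X, (exists M, forall n, hnorm (x n) <= M) ->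
    exists phi : nat -> nat, (forall n, (phi n < phi (S n))%nat) /\
      exists l, Un_cv (fun n => hnorm (hsub (A (x (phi n))) l)) 0.

Definition orthonormal_basis (u : nat -> X) : Prop :=
  (forall i j, hinner HX (u i) (u j) = if Nat.eqb i j then C1 else C0) /\
  (forall x eps, eps > 0 -> exists (N : nat) (c : nat -> Cplx),
     hnorm (hsub x (hsum N (fun n => hscal HX (c n) (u n)))) < eps).

(* A_N, g_N, hat; vectors of Cplx^N are represented by nat -> Cplx, only the
   entries with index < N being relevant (0-based indices). *)
Definition matA (A : X -> X) (u v : nat -> X) (i j : nat) : Cplx :=
  hinner HX (v i) (A (u j)).
Definition vecg (v : nat -> X) (g : X) (i : nat) : Cplx := hinner HX (v i) g.
Definition hat (u : nat -> X) (N : nat) (x : nat -> Cplx) : X :=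
  hsum N (fun n => hscal HX (x n) (u n)).

Definition residual (A : X -> X) (u v : nat -> X) (g : X) (N : nat)
  (x : nat -> Cplx) (i : nat) : Cplx :=
  Csub (Csum N (fun j => Cmul (matA A u v i j) (x j))) (vecg v g i).

Definition CNnorm (N : nat) (x : nat -> Cplx) : R :=
  sqrt (Csum N (fun i => mkC (Cmod (x i) ^ 2) 0)).(Re).

End Ops.

From Pilot Require Import Defs.
From Stdlib Require Import Reals Lra Lia Psatz Classical IndefiniteDescription.
Open Scope R_scope.

(* The residual bounds the coordinates [<<v i, g - A fhat_N>>] for [i < N], so
   [g - A fhat_N] tends to 0 coordinatewise.  As [fhat_N] is bounded and [A] compact,
   every subsequence of [A fhat_N] has a norm-convergent subsequence, whose limit must
   then be [g]; this gives norm convergence.  For weak convergence, the [eta] with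
   [<<eta, f - fhat_N>> -> 0] form a closed subspace (the errors are bounded) which
   contains [A^* A w] for every [w], because [A (f - fhat_N) -> 0]; any [w] orthogonal
   to it satisfies [nrm (A w) = 0], so the subspace is everything by injectivity. *)

Lemma Cplx_ext a b : Re a = Re b -> Im a = Im b -> a = b.
Proof. destruct a, b; simpl; intros; subst; reflexivity. Qed.

Ltac Cring :=
  apply Cplx_ext; unfold Cadd, Csub, Copp, Cmul, Cconj, C0, Defs.C1 in *; simpl in *; ring.

Lemma le_of_pow2_le a b : 0 <= b -> a ^ 2 <= b ^ 2 -> a <= b.
Proof. intros; nra. Qed.

Lemma Cmod_ge0 a : 0 <= Cmod a.
Proof. apply sqrt_pos. Qed.

Lemma Cmod_sq a : Cmod a ^ 2 = Re a ^ 2 + Im a ^ 2.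
Proof. unfold Cmod. rewrite pow2_sqrt; nra. Qed.

Lemma Cmod_eq0 a : Cmod a = 0 -> a = C0.
Proof.
  intros E. assert (Cmod a ^ 2 = 0) as Esq by (rewrite E; ring).
  rewrite Cmod_sq in Esq. apply Cplx_ext; simpl; nra.
Qed.

Lemma Cmod_C0 : Cmod C0 = 0.
Proof. unfold Cmod, C0; cbn [Re Im]. replace (0 ^ 2 + 0 ^ 2) with 0 by ring. apply sqrt_0. Qed.

Lemma Cmod_real r : Cmod (mkC r 0) = Rabs r.
Proof. unfold Cmod; simpl. rewrite <- sqrt_Rsqr_abs. f_equal. unfold Rsqr. ring. Qed.

Lemma Cmod_Re a : Rabs (Re a) <= Cmod a.
Proof. apply le_of_pow2_le; [apply Cmod_ge0|]. rewrite pow2_abs, Cmod_sq. nra. Qed.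

Lemma Cmod_mul a b : Cmod (Cmul a b) = Cmod a * Cmod b.
Proof. unfold Cmod, Cmul; simpl. rewrite <- sqrt_mult by nra. f_equal; ring. Qed.

Lemma Cmod_opp a : Cmod (Copp a) = Cmod a.
Proof. unfold Cmod, Copp; simpl; f_equal; ring. Qed.

Lemma Cmod_conj a : Cmod (Cconj a) = Cmod a.
Proof. unfold Cmod, Cconj; simpl; f_equal; ring. Qed.

Lemma Cmod_add a b : Cmod (Cadd a b) <= Cmod a + Cmod b.
Proof.
  pose proof (Cmod_ge0 a); pose proof (Cmod_ge0 b).
  apply le_of_pow2_le; [lra|].
  assert (Hdot : Re a * Re b + Im a * Im b <= Cmod a * Cmod b).
  { apply Rle_trans with (Rabs (Re a * Re b + Im a * Im b)); [apply Rle_abs|].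
    apply le_of_pow2_le; [nra|].
    rewrite pow2_abs, Rpow_mult_distr, !Cmod_sq.
    pose proof (pow2_ge_0 (Re a * Im b - Im a * Re b)). nra. }
  replace ((Cmod a + Cmod b) ^ 2) with (Cmod a ^ 2 + Cmod b ^ 2 + 2 * (Cmod a * Cmod b)) by ring.
  rewrite !Cmod_sq. unfold Cadd; simpl. nra.
Qed.

Lemma Cmod_sub_sym a b : Cmod (Csub a b) = Cmod (Csub b a).
Proof. replace (Csub a b) with (Copp (Csub b a)) by Cring. apply Cmod_opp. Qed.

Lemma Cmod_sub_le a b : Cmod a <= Cmod (Csub a b) + Cmod b.
Proof. replace a with (Cadd (Csub a b) b) at 1 by Cring. apply Cmod_add. Qed.

Lemma increasing_ge_id (phi : nat -> nat) :
  (forall n, (phi n < phi (S n))%nat) -> forall n, (n <= phi n)%nat.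
Proof. intros Hphi n; induction n as [|n IH]; [lia|]. specialize (Hphi n). lia. Qed.

Lemma le0_of_le_mult_eps c K : 0 <= K -> (forall e, e > 0 -> c <= K * e) -> c <= 0.
Proof.
  intros HK Hc. apply Rle_plus_epsilon. intros e He.
  assert (HKe : K * (e / (K + 1)) <= e).
  { apply Rmult_le_reg_r with (K + 1); [lra|].
    replace (K * (e / (K + 1)) * (K + 1)) with (K * e) by (field; lra). nra. }
  specialize (Hc (e / (K + 1)) ltac:(apply Rdiv_lt_0_compat; lra)). lra.
Qed.

Lemma Un_cv_const c : Un_cv (fun _ => c) c.
Proof. intros e He. exists 0%nat. intros. unfold Rdist. rewrite Rminus_diag, Rabs_R0. exact He. Qed.

Lemma Un_cv0_lt (u : nat -> R) :
  Un_cv u 0 -> forall e, e > 0 -> exists N, forall n, (n >= N)%nat -> u n < e.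
Proof.
  intros Hu e He. destruct (Hu e He) as [N HN]. exists N. intros n Hn. specialize (HN n Hn).
  unfold Rdist in HN. rewrite Rminus_0_r in HN. pose proof (Rle_abs (u n)). lra.
Qed.

Lemma Un_cv0_le (u : nat -> R) : (forall n, 0 <= u n) ->
  (forall e, e > 0 -> exists N, forall n, (n >= N)%nat -> u n <= e) -> Un_cv u 0.
Proof.
  intros Hu Hle e He. destruct (Hle (e / 2)) as [N HN]; [lra|]. exists N. intros n Hn.
  specialize (HN n Hn). specialize (Hu n). unfold Rdist. rewrite Rminus_0_r, Rabs_right; lra.
Qed.

Lemma Un_cv0_squeeze (u v : nat -> R) :
  (forall n, 0 <= u n <= v n) -> Un_cv v 0 -> Un_cv u 0.
Proof.
  intros Huv Hv. apply Un_cv0_le; [intros n; apply Huv|]. intros e He.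
  destruct (Un_cv0_lt v Hv e He) as [N HN]. exists N. intros n Hn.
  specialize (HN n Hn). specialize (Huv n). lra.
Qed.

Lemma Un_cv0_scal (v : nat -> R) c : Un_cv v 0 -> Un_cv (fun n => c * v n) 0.
Proof. intros Hv. rewrite <- (Rmult_0_r c). apply CV_mult; [apply Un_cv_const | exact Hv]. Qed.

Lemma Un_cv0_plus (v w : nat -> R) : Un_cv v 0 -> Un_cv w 0 -> Un_cv (fun n => v n + w n) 0.
Proof. intros Hv Hw. rewrite <- (Rplus_0_r 0). apply CV_plus; assumption. Qed.

Lemma le0_of_le_Un_cv0 c (u : nat -> R) : (forall n, c <= u n) -> Un_cv u 0 -> c <= 0.
Proof. intros Hc Hu. exact (Rle_cv_lim Hc (Un_cv_const c) Hu). Qed.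

Lemma Un_cv_subseq (u : nat -> R) l (s : nat -> nat) :
  Un_cv u l -> (forall n, (n <= s n)%nat) -> Un_cv (fun n => u (s n)) l.
Proof.
  intros Hu Hs e He. destruct (Hu e He) as [N HN]. exists N. intros n Hn. apply HN.
  specialize (Hs n). lia.
Qed.

Lemma Un_cv0_inv_INR_S : Un_cv (fun n => / (INR n + 1)) 0.
Proof.
  apply cv_infty_cv_0. intros M. destruct (INR_unbounded M) as [N HN]. exists N. intros n Hn.
  apply le_INR in Hn. lra.
Qed.

Lemma not_Un_cv0_subseq (u : nat -> R) : ~ Un_cv u 0 ->
  exists d (s : nat -> nat), d > 0 /\ forall k, (k <= s k)%nat /\ d <= Rabs (u (s k)).
Proof.
  intros Hu. apply NNPP. intros Hno. apply Hu. intros d Hd. apply NNPP. intros Hfar.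
  apply Hno. exists d.
  assert (Hs : forall k, exists n, (k <= n)%nat /\ d <= Rabs (u n)).
  { intros k. apply NNPP. intros Hk. apply Hfar. exists k. intros n Hn. unfold Rdist.
    rewrite Rminus_0_r. apply Rnot_le_lt. intros Hle. apply Hk. exists n. split; [lia | exact Hle]. }
  destruct (functional_choice _ Hs) as [s Hs']. exists s. split; [exact Hd | exact Hs'].
Qed.

Section Hilbert.
Context {X : Type} (H : HilbertSpace X).
Local Notation "x +h y" := (hadd H x y) (at level 50, left associativity).
Local Notation "a *h x" := (hscal H a x) (at level 40).
Local Notation "x -h y" := (hsub H x y) (at level 50, left associativity).
Local Notation "'O'" := (hzero H).
Local Notation "<< x , y >>" := (hinner H x y).
Local Notation nrm := (hnorm H).

Definition hnorm2 (x : X) : R := Re << x, x >>.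
Local Notation nrm2 := hnorm2.

Lemma hadd_cancel_l a b c : a +h b = a +h c -> b = c.
Proof.
  intros E. assert (E' : hopp H a +h (a +h b) = hopp H a +h (a +h c)) by (rewrite E; reflexivity).
  rewrite !hadd_assoc, (hadd_comm _ H (hopp H a)), hadd_opp, !(hadd_comm _ H O), !hadd_0 in E'.
  exact E'.
Qed.

Lemma hadd_0_l x : O +h x = x.
Proof. rewrite hadd_comm, hadd_0. reflexivity. Qed.

Lemma hscal_C0 x : C0 *h x = O.
Proof. apply (hadd_cancel_l (C0 *h x)). rewrite <- hscal_distr_r, hadd_0. f_equal. Cring. Qed.

Lemma hopp_scal x : hopp H x = mkC (-1) 0 *h x.
Proof.
  apply (hadd_cancel_l x). rewrite hadd_opp, <- (hscal_1 _ H x) at 1.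
  rewrite <- hscal_distr_r, <- (hscal_C0 x). f_equal. Cring.
Qed.

Lemma hsub_scal x y : x -h y = x +h mkC (-1) 0 *h y.
Proof. unfold hsub. rewrite hopp_scal. reflexivity. Qed.

Lemma hopp_add a b : hopp H (a +h b) = hopp H a +h hopp H b.
Proof.
  apply (hadd_cancel_l (a +h b)).
  rewrite hadd_opp, hadd_assoc, (hadd_comm _ H a b), <- (hadd_assoc _ H b a), hadd_opp, hadd_0, hadd_opp.
  reflexivity.
Qed.

Lemma hopp_opp a : hopp H (hopp H a) = a.
Proof. apply (hadd_cancel_l (hopp H a)). rewrite hadd_opp, hadd_comm, hadd_opp. reflexivity. Qed.

Lemma hsub_0 x : x -h O = x.
Proof.
  unfold hsub. assert (E : hopp H O = O) by (rewrite <- (hadd_0_l (hopp H O)); apply hadd_opp).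
  rewrite E; apply hadd_0.
Qed.

Lemma hsub_eq0 x y : x -h y = O -> x = y.
Proof.
  intros E. assert (E' : x -h y +h y = y) by (rewrite E; apply hadd_0_l).
  unfold hsub in E'. rewrite <- hadd_assoc, (hadd_comm _ H (hopp H y)), hadd_opp, hadd_0 in E'.
  exact E'.
Qed.

Lemma hadd_hsub_hsub x y z : (x -h y) +h (y -h z) = x -h z.
Proof.
  unfold hsub.
  rewrite <- hadd_assoc, (hadd_assoc _ H (hopp H y)), (hadd_comm _ H (hopp H y) y), hadd_opp, hadd_0_l.
  reflexivity.
Qed.

Lemma hopp_hsub x y : hopp H (x -h y) = y -h x.
Proof. unfold hsub. rewrite hopp_add, hopp_opp, hadd_comm. reflexivity. Qed.

Lemma hsub_hsub_r x y z : x -h (y -h z) = (x -h y) +h z.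
Proof. unfold hsub. rewrite hopp_add, hopp_opp, hadd_assoc. reflexivity. Qed.

Lemma hsub_hsub_same_l x y z : (x -h y) -h (x -h z) = z -h y.
Proof. unfold hsub at 1. rewrite hopp_hsub, hadd_comm, hadd_hsub_hsub. reflexivity. Qed.

Lemma hinner_0_r x : << x, O >> = C0.
Proof.
  assert (E : << x, O >> = Cadd << x, O >> << x, O >>) by (rewrite <- hinner_add_r, hadd_0; reflexivity).
  pose proof (f_equal Re E); pose proof (f_equal Im E); simpl in *; apply Cplx_ext; simpl; lra.
Qed.

Lemma hinner_0_l x : << O, x >> = C0.
Proof. rewrite hinner_conj, hinner_0_r. Cring. Qed.

Lemma hinner_add_l x y z : << x +h y, z >> = Cadd << x, z >> << y, z >>.
Proof. rewrite hinner_conj, hinner_add_r, (hinner_conj _ H z x), (hinner_conj _ H z y). Cring. Qed.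

Lemma hinner_scal_l a x y : << a *h x, y >> = Cmul (Cconj a) << x, y >>.
Proof. rewrite hinner_conj, hinner_scal_r, (hinner_conj _ H y x). Cring. Qed.

Lemma hinner_sub_r x y z : << x, y -h z >> = Csub << x, y >> << x, z >>.
Proof. rewrite hsub_scal, hinner_add_r, hinner_scal_r. Cring. Qed.

Lemma hinner_sub_l x y z : << x -h y, z >> = Csub << x, z >> << y, z >>.
Proof. rewrite hsub_scal, hinner_add_l, hinner_scal_l. Cring. Qed.

Lemma hinner_hsum x N F : << x, hsum H N F >> = Csum N (fun n => << x, F n >>).
Proof. induction N as [|N IH]; simpl; [apply hinner_0_r|]. rewrite hinner_add_r, IH. reflexivity. Qed.

Lemma hnorm2_ge0 x : 0 <= nrm2 x.
Proof. apply hinner_pos. Qed.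

Lemma hnorm_ge0 x : 0 <= nrm x.
Proof. apply sqrt_pos. Qed.

Lemma hnorm_sq x : nrm x ^ 2 = nrm2 x.
Proof. unfold hnorm. rewrite pow2_sqrt; [reflexivity | apply hnorm2_ge0]. Qed.

Lemma hnorm2_add_scal x t y : nrm2 (x +h t *h y) =
  nrm2 x + 2 * (Re t * Re << x, y >> - Im t * Im << x, y >>) + (Re t ^ 2 + Im t ^ 2) * nrm2 y.
Proof.
  unfold hnorm2. rewrite hinner_add_l, !hinner_add_r, hinner_scal_l, !hinner_scal_r, hinner_scal_l.
  rewrite (hinner_conj _ H y x). destruct (hinner_pos _ H y) as [Hy _].
  destruct t as [t1 t2]. destruct << x, y >> as [b1 b2]. simpl. rewrite Hy. ring.
Qed.

Lemma hnorm2_add x y : nrm2 (x +h y) = nrm2 x + 2 * Re << x, y >> + nrm2 y.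
Proof. rewrite <- (hscal_1 _ H y) at 1. rewrite hnorm2_add_scal. unfold Defs.C1; simpl. ring. Qed.

Lemma hnorm2_scal a x : nrm2 (a *h x) = Cmod a ^ 2 * nrm2 x.
Proof.
  unfold hnorm2. rewrite hinner_scal_l, hinner_scal_r, Cmod_sq.
  destruct (hinner_pos _ H x) as [Hi _]. destruct a as [a1 a2]; destruct << x, x >> as [c1 c2].
  simpl in *. subst. ring.
Qed.

Lemma hnorm_scal a x : nrm (a *h x) = Cmod a * nrm x.
Proof.
  unfold hnorm. fold (hnorm2 (a *h x)). rewrite hnorm2_scal, sqrt_mult.
  - rewrite sqrt_pow2 by apply Cmod_ge0. reflexivity.
  - pose proof (Cmod_ge0 a); nra.
  - apply hnorm2_ge0.
Qed.

Lemma hnorm_opp x : nrm (hopp H x) = nrm x.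
Proof. rewrite hopp_scal, hnorm_scal, Cmod_real, Rabs_left by lra. ring. Qed.

Lemma hnorm_sub_sym x y : nrm (x -h y) = nrm (y -h x).
Proof. rewrite <- hopp_hsub, hnorm_opp. reflexivity. Qed.

Lemma hnorm_0 : nrm O = 0.
Proof. unfold hnorm. rewrite hinner_0_r. simpl. apply sqrt_0. Qed.

Lemma hnorm_eq0 x : nrm x = 0 -> x = O.
Proof.
  intros E. apply hinner_def. assert (E2 : nrm2 x = 0) by (rewrite <- hnorm_sq, E; ring).
  destruct (hinner_pos _ H x). apply Cplx_ext; simpl; assumption.
Qed.

(* Minimising [nrm2 (x + t y)] over [t] proportional to [- <<x, y>>]; when [nrm2 y = 0]
   the quadratic degenerates to a linear function of [t] with slope [|<<x,y>>|^2]. *)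
Lemma cauchy_schwarz x y : Cmod << x, y >> <= nrm x * nrm y.
Proof.
  pose proof (hnorm_ge0 x); pose proof (hnorm_ge0 y).
  apply le_of_pow2_le; [nra|].
  rewrite Rpow_mult_distr, !hnorm_sq, Cmod_sq.
  destruct << x, y >> as [b1 b2] eqn:Eb. simpl.
  pose proof (hnorm2_ge0 x). pose proof (hnorm2_ge0 y).
  destruct (Req_dec (nrm2 y) 0) as [Hy|Hy].
  - destruct (Req_dec (b1 ^ 2 + b2 ^ 2) 0) as [Hb|Hb]; [nra|].
    set (L := (nrm2 x + 1) / (2 * (b1 ^ 2 + b2 ^ 2))).
    assert (HL : L * (2 * (b1 ^ 2 + b2 ^ 2)) = nrm2 x + 1) by (unfold L; field; nra).
    pose proof (hnorm2_ge0 (x +h mkC (- L * b1) (L * b2) *h y)) as Hq.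
    rewrite hnorm2_add_scal, Eb, Hy in Hq. simpl in Hq. nra.
  - set (t := mkC (- b1 / nrm2 y) (b2 / nrm2 y)).
    pose proof (hnorm2_ge0 (x +h t *h y)) as Hq.
    rewrite hnorm2_add_scal, Eb in Hq. unfold t in Hq; simpl in Hq.
    assert (E : 2 * (- b1 / nrm2 y * b1 - b2 / nrm2 y * b2)
                + (- b1 / nrm2 y * (- b1 / nrm2 y * 1) + b2 / nrm2 y * (b2 / nrm2 y * 1)) * nrm2 y
                = - (b1 ^ 2 + b2 ^ 2) / nrm2 y) by (field; lra).
    rewrite Rplus_assoc, E in Hq.
    assert (E' : (nrm2 x + - (b1 ^ 2 + b2 ^ 2) / nrm2 y) * nrm2 y = nrm2 x * nrm2 y - (b1 ^ 2 + b2 ^ 2))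
      by (field; lra).
    assert (0 <= (nrm2 x + - (b1 ^ 2 + b2 ^ 2) / nrm2 y) * nrm2 y) by (apply Rmult_le_pos; lra).
    lra.
Qed.

Lemma hnorm_triangle x y : nrm (x +h y) <= nrm x + nrm y.
Proof.
  pose proof (hnorm_ge0 x); pose proof (hnorm_ge0 y).
  apply le_of_pow2_le; [lra|].
  rewrite hnorm_sq, hnorm2_add.
  replace ((nrm x + nrm y) ^ 2) with (nrm x ^ 2 + nrm y ^ 2 + 2 * (nrm x * nrm y)) by ring.
  rewrite !hnorm_sq. pose proof (cauchy_schwarz x y). pose proof (Cmod_Re << x, y >>).
  pose proof (Rle_abs (Re << x, y >>)). lra.
Qed.

Lemma hnorm_sub_triangle x y z : nrm (x -h z) <= nrm (x -h y) + nrm (y -h z).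
Proof. rewrite <- (hadd_hsub_hsub x y z). apply hnorm_triangle. Qed.

Lemma hnorm_sub_le x y : nrm (x -h y) <= nrm x + nrm y.
Proof. unfold hsub. rewrite <- (hnorm_opp y). apply hnorm_triangle. Qed.

Lemma hinner_sub_r_le a x y : Cmod (Csub << a, x >> << a, y >>) <= nrm a * nrm (x -h y).
Proof. rewrite <- hinner_sub_r. apply cauchy_schwarz. Qed.

Lemma hinner_sub_l_le a x y : Cmod (Csub << x, a >> << y, a >>) <= nrm (x -h y) * nrm a.
Proof. rewrite <- hinner_sub_l. apply cauchy_schwarz. Qed.


Lemma hnorm_cv (x : nat -> X) y :
  Un_cv (fun n => nrm (x n -h y)) 0 -> Un_cv (fun n => nrm (x n)) (nrm y).
Proof.
  intros Hx e He. destruct (Un_cv0_lt _ Hx e He) as [N HN]. exists N. intros n Hn.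
  specialize (HN n Hn). unfold Rdist. apply Rabs_def1.
  - pose proof (hnorm_sub_triangle (x n) y O). rewrite !hsub_0 in H0. lra.
  - pose proof (hnorm_sub_triangle y (x n) O). rewrite !hsub_0, hnorm_sub_sym in H0. lra.
Qed.

Section LinearMap.
Variable T : X -> X.
Hypothesis HT : is_linear H T.

Lemma linear_add x y : T (x +h y) = T x +h T y.
Proof. apply HT. Qed.

Lemma linear_scal a x : T (a *h x) = a *h T x.
Proof. apply HT. Qed.

Lemma linear_0 : T O = O.
Proof. apply (hadd_cancel_l (T O)). rewrite <- linear_add, !hadd_0. reflexivity. Qed.

Lemma linear_sub x y : T (x -h y) = T x -h T y.
Proof. rewrite !hsub_scal, linear_add, linear_scal. reflexivity. Qed.

Lemma linear_hsum N F : T (hsum H N F) = hsum H N (fun n => T (F n)).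
Proof. induction N as [|N IH]; simpl; [apply linear_0|]. rewrite linear_add, IH. reflexivity. Qed.

End LinearMap.

(* An unbounded [T] yields unit vectors [y n] with [nrm (T (y n)) > n], and no
   subsequence of [T (y n)] can then converge. *)
Lemma compact_operator_bounded (T : X -> X) :
  compact_operator H T -> exists K, forall x, nrm (T x) <= K * nrm x.
Proof.
  intros [HT Hc]. apply NNPP. intros Hunb.
  assert (Hx : forall n : nat, exists x, nrm (T x) > INR n * nrm x).
  { intros n. apply NNPP. intros Hn. apply Hunb. exists (INR n).
    intros x. apply Rnot_gt_le. intros Hg. apply Hn. exists x. exact Hg. }
  destruct (functional_choice _ Hx) as [x Hx'].
  assert (Hpos : forall n, nrm (x n) > 0).
  { intros n. specialize (Hx' n). pose proof (hnorm_ge0 (x n)).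
    destruct (Req_dec (nrm (x n)) 0) as [E|E]; [|lra].
    apply hnorm_eq0 in E. rewrite E, (linear_0 T HT), hnorm_0 in Hx'. lra. }
  set (y := fun n => mkC (/ nrm (x n)) 0 *h x n).
  assert (Hscale : forall n z, nrm (mkC (/ nrm (x n)) 0 *h z) = nrm z / nrm (x n)).
  { intros n z. specialize (Hpos n). rewrite hnorm_scal, Cmod_real, Rabs_right.
    - unfold Rdiv. ring.
    - apply Rle_ge, Rlt_le, Rinv_0_lt_compat, Hpos. }
  assert (Hy : forall n, nrm (y n) = 1).
  { intros n. unfold y. rewrite Hscale. field. specialize (Hpos n). lra. }
  assert (HTy : forall n, nrm (T (y n)) > INR n).
  { intros n. unfold y. rewrite (linear_scal T HT), Hscale.
    specialize (Hx' n). specialize (Hpos n).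
    apply Rmult_gt_reg_l with (nrm (x n)); [lra|]. field_simplify; lra. }
  destruct (Hc y) as [phi [Hphi [l Hl]]]; [exists 1; intros n; rewrite Hy; lra|].
  destruct (Hl 1 Rlt_0_1) as [N HN].
  destruct (INR_unbounded (nrm l + 1)) as [m Hm].
  specialize (HN (max N m) (Nat.le_max_l _ _)). unfold Rdist in HN.
  set (k := phi (max N m)) in HN.
  rewrite Rminus_0_r, Rabs_right in HN by (apply Rle_ge, hnorm_ge0).
  pose proof (hnorm_sub_triangle (T (y k)) l O) as Htri. rewrite !hsub_0 in Htri.
  assert (INR m <= INR k).
  { apply le_INR. pose proof (increasing_ge_id phi Hphi (max N m)). unfold k. lia. }
  specialize (HTy k). lra.
Qed.

Definition closed_subspace (P : X -> Prop) : Prop :=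
  P O /\ (forall x y, P x -> P y -> P (x +h y)) /\ (forall a x, P x -> P (a *h x)) /\
  (forall (s : nat -> X) x, (forall n, P (s n)) -> Un_cv (fun n => nrm (s n -h x)) 0 -> P x).

Section Projection.
Variable P : X -> Prop.
Hypothesis HP : closed_subspace P.
Variable eta : X.

Lemma closed_subspace_sub x y : P x -> P y -> P (x -h y).
Proof. destruct HP as (_ & Hadd & Hscal & _). intros. rewrite hsub_scal. auto. Qed.

Lemma distance_inf : exists d,
  (forall s, P s -> d <= nrm2 (eta -h s)) /\
  (forall e, e > 0 -> exists s, P s /\ nrm2 (eta -h s) < d + e).
Proof.
  set (E := fun r => exists s, P s /\ r = - nrm2 (eta -h s)).
  assert (HB : bound E).
  { exists 0. intros r [s [_ ->]]. pose proof (hnorm2_ge0 (eta -h s)). lra. }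
  assert (HE : exists r, E r) by (exists (- nrm2 (eta -h O)); exists O; split; [apply HP | reflexivity]).
  destruct (completeness E HB HE) as [m [Hub Hlub]].
  exists (- m). split.
  - intros s Ps. assert (- nrm2 (eta -h s) <= m) by (apply Hub; exists s; auto). lra.
  - intros e He. apply NNPP. intros Hno.
    assert (m <= m - e); [|lra].
    apply Hlub. intros r [s [Ps ->]]. apply Rnot_gt_le. intros Hg. apply Hno. exists s. split; [exact Ps | lra].
Qed.

(* The parallelogram law, applied to [eta - a] and [eta - b] and with the
   midpoint of [a] and [b] lying in [P]. *)
Lemma minimizing_pair_close d a b :
  (forall s, P s -> d <= nrm2 (eta -h s)) -> P a -> P b ->
  nrm2 (a -h b) <= 2 * (nrm2 (eta -h a) - d) + 2 * (nrm2 (eta -h b) - d).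
Proof.
  intros Hd Pa Pb. destruct HP as (_ & _ & Hscal & _).
  set (x := eta -h a). set (y := a -h b).
  assert (Eb : eta -h b = x +h Defs.C1 *h y) by (rewrite hscal_1; unfold x, y; symmetry; apply hadd_hsub_hsub).
  assert (Pm : P (a -h mkC (/ 2) 0 *h y)) by (apply closed_subspace_sub, Hscal, closed_subspace_sub; auto).
  assert (Em : eta -h (a -h mkC (/ 2) 0 *h y) = x +h mkC (/ 2) 0 *h y) by apply hsub_hsub_r.
  pose proof (Hd _ Pm) as Hmid. rewrite Em, hnorm2_add_scal in Hmid.
  rewrite Eb, hnorm2_add_scal. simpl in *. lra.
Qed.

Lemma distance_attained : exists p, P p /\ forall s, P s -> nrm2 (eta -h p) <= nrm2 (eta -h s).
Proof.
  destruct (distance_inf) as [d [Hd Happrox]].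
  assert (Hs : forall n : nat, exists s, P s /\ nrm2 (eta -h s) < d + / (INR n + 1)).
  { intros n. apply Happrox. apply Rlt_gt, Rinv_0_lt_compat. pose proof (pos_INR n); lra. }
  destruct (functional_choice _ Hs) as [s Hs'].
  assert (Hcauchy : forall e, e > 0 -> exists M, forall n k, (n >= M)%nat -> (k >= M)%nat ->
                    nrm (s n -h s k) < e).
  { intros e He. destruct (Un_cv0_lt _ Un_cv0_inv_INR_S (e ^ 2 / 4)) as [M HM].
    { apply Rlt_gt, Rdiv_lt_0_compat; [apply pow_lt|]; lra. }
    exists M. intros n k Hn Hk.
    destruct (Hs' n) as [Pn Hn']. destruct (Hs' k) as [Pk Hk'].
    pose proof (minimizing_pair_close d _ _ Hd Pn Pk) as Hclose.
    pose proof (HM n Hn). pose proof (HM k Hk).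
    apply Rnot_le_lt. intros Hle. rewrite <- hnorm_sq in Hclose.
    assert (e ^ 2 <= nrm (s n -h s k) ^ 2) by (apply pow_incr; lra). nra. }
  destruct (hcomplete _ H s Hcauchy) as [p Hp].
  assert (Hp' : Un_cv (fun n => nrm (s n -h p)) 0).
  { apply Un_cv0_le; [intros; apply hnorm_ge0|]. intros e He. destruct (Hp e He) as [N HN].
    exists N. intros n Hn. apply Rlt_le, HN, Hn. }
  destruct HP as (_ & _ & _ & Hclosed).
  exists p. split; [apply (Hclosed s); [intros n; apply Hs' | exact Hp']|].
  intros s0 Ps0. apply Rle_trans with d; [|apply Hd, Ps0].
  assert (Hdist : Un_cv (fun n => nrm (eta -h s n)) (nrm (eta -h p))).
  { apply hnorm_cv. eapply Un_cv0_squeeze; [|exact Hp'].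
    intros n. rewrite hsub_hsub_same_l, hnorm_sub_sym. split; [apply hnorm_ge0 | apply Rle_refl]. }
  assert (Hlim : nrm (eta -h p) * nrm (eta -h p) <= d + 0).
  { apply (Rle_cv_lim (Un := fun n => nrm (eta -h s n) * nrm (eta -h s n))
                      (Vn := fun n => d + / (INR n + 1))).
    - intros n. pose proof (hnorm_sq (eta -h s n)). destruct (Hs' n) as [_ Hn]. nra.
    - apply CV_mult; exact Hdist.
    - apply CV_plus; [apply Un_cv_const | apply Un_cv0_inv_INR_S]. }
  rewrite <- hnorm_sq. nra.
Qed.

(* Perturb [p] to [p - t s0] with [t = - L <<s0, eta - p>>]: for [0 < L] small enough the
   distance would strictly decrease unless [<<s0, eta - p>> = 0]. *)
Lemma minimizer_orthogonal p : P p -> (forall s, P s -> nrm2 (eta -h p) <= nrm2 (eta -h s)) ->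
  forall s0, P s0 -> << s0, eta -h p >> = C0.
Proof.
  intros Pp Hmin s0 Ps0. destruct HP as (_ & _ & Hscal & _).
  set (w := eta -h p).
  destruct << s0, w >> as [b1 b2] eqn:Eb.
  pose proof (hnorm2_ge0 s0) as Hs0.
  set (L := / (nrm2 s0 + 1)).
  assert (HL0 : 0 < L) by (apply Rinv_0_lt_compat; lra).
  assert (HL1 : L * nrm2 s0 < 1) by (assert (L * (nrm2 s0 + 1) = 1) by (unfold L; field; lra); nra).
  set (t := mkC (- L * b1) (- L * b2)).
  assert (Pq : P (p -h t *h s0)) by (apply closed_subspace_sub; auto).
  pose proof (Hmin _ Pq) as Hq. rewrite hsub_hsub_r in Hq. fold w in Hq.
  rewrite hnorm2_add_scal, (hinner_conj _ H w s0), Eb in Hq. unfold t in Hq; simpl in Hq.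
  assert (Hb : (b1 ^ 2 + b2 ^ 2) * (L * (2 - L * nrm2 s0)) <= 0) by nra.
  assert (Hpos : 0 < L * (2 - L * nrm2 s0)) by nra.
  assert (Hz : b1 ^ 2 + b2 ^ 2 <= 0).
  { apply Rnot_lt_le. intros Hlt. pose proof (Rmult_lt_0_compat _ _ Hlt Hpos). lra. }
  apply Cplx_ext; simpl; nra.
Qed.

End Projection.

Lemma projection_theorem P eta : closed_subspace P ->
  exists p, P p /\ forall s, P s -> << s, eta -h p >> = C0.
Proof.
  intros HP. destruct (distance_attained P HP eta) as [p [Pp Hmin]].
  exists p. split; [exact Pp | apply minimizer_orthogonal; assumption].
Qed.

Lemma closed_subspace_full P : closed_subspace P ->
  (forall w, (forall s, P s -> << s, w >> = C0) -> w = O) -> forall x, P x.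
Proof.
  intros HP Horth x. destruct (projection_theorem P x HP) as [p [Pp Hp]].
  apply Horth, hsub_eq0 in Hp. rewrite Hp. exact Pp.
Qed.

Section Riesz.
Variable phi : X -> Cplx.
Hypothesis phi_add : forall x y, phi (x +h y) = Cadd (phi x) (phi y).
Hypothesis phi_scal : forall a x, phi (a *h x) = Cmul a (phi x).
Variable K : R.
Hypothesis phi_bounded : forall x, Cmod (phi x) <= K * nrm x.

Lemma functional_0 : phi O = C0.
Proof.
  assert (E : phi O = Cadd (phi O) (phi O)) by (rewrite <- phi_add, hadd_0; reflexivity).
  pose proof (f_equal Re E); pose proof (f_equal Im E); simpl in *; apply Cplx_ext; simpl; lra.
Qed.

Lemma functional_sub x y : phi (x -h y) = Csub (phi x) (phi y).
Proof. rewrite hsub_scal, phi_add, phi_scal. Cring. Qed.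

Lemma functional_kernel_closed : closed_subspace (fun x => phi x = C0).
Proof.
  repeat split.
  - apply functional_0.
  - intros x y Hx Hy. rewrite phi_add, Hx, Hy. Cring.
  - intros a x Hx. rewrite phi_scal, Hx. Cring.
  - intros s x Hs Hc. apply Cmod_eq0, Rle_antisym; [|apply Cmod_ge0].
    apply (le0_of_le_Un_cv0 _ (fun n => K * nrm (s n -h x))); [|apply Un_cv0_scal, Hc].
    intros n. replace (phi x) with (phi (x -h s n)) by (rewrite functional_sub, Hs; Cring).
    rewrite hnorm_sub_sym. apply phi_bounded.
Qed.

(* The representer is a multiple of any [z] orthogonal to the kernel with [phi z <> 0],
   since [phi z x - phi x z] always lies in the kernel. *)
Lemma riesz_representation : exists r, forall x, phi x = << r, x >>.
Proof.
  destruct (classic (forall x, phi x = C0)) as [Hall|Hex].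
  { exists O. intros x. rewrite Hall, hinner_0_l. reflexivity. }
  apply not_all_ex_not in Hex. destruct Hex as [x0 Hx0].
  destruct (projection_theorem _ x0 functional_kernel_closed) as [p [Pp Hp]].
  set (z := x0 -h p).
  assert (Hz : phi z <> C0).
  { unfold z. rewrite functional_sub, Pp. intros E. apply Hx0.
    pose proof (f_equal Re E); pose proof (f_equal Im E); simpl in *; apply Cplx_ext; simpl; lra. }
  assert (Hnz : nrm2 z <> 0).
  { intros E. apply Hz. replace z with O by (symmetry; apply hnorm_eq0; unfold hnorm; fold (nrm2 z);
      rewrite E; apply sqrt_0). apply functional_0. }
  exists (Cmul (mkC (/ nrm2 z) 0) (Cconj (phi z)) *h z).
  intros x.
  assert (Hker : phi (phi z *h x -h phi x *h z) = C0) by (rewrite functional_sub, !phi_scal; Cring).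
  specialize (Hp _ Hker). fold z in Hp.
  rewrite hinner_sub_l, !hinner_scal_l in Hp. rewrite hinner_scal_l.
  rewrite (hinner_conj _ H x z) in Hp. destruct (hinner_pos _ H z) as [Hi _].
  unfold hnorm2 in *.
  destruct << z, z >> as [n1 n2]. destruct << z, x >> as [w1 w2].
  destruct (phi x) as [a1 a2]. destruct (phi z) as [c1 c2]. simpl in *. subst n2.
  pose proof (f_equal Re Hp) as R1. pose proof (f_equal Im Hp) as R2. simpl in R1, R2.
  apply Cplx_ext; simpl; apply Rmult_eq_reg_r with n1; auto; field_simplify; auto; nra.
Qed.

End Riesz.

Lemma bounded_operator_adjoint (T : X -> X) (K : R) : is_linear H T ->
  (forall x, nrm (T x) <= K * nrm x) -> forall y, exists r, forall x, << y, T x >> = << r, x >>.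
Proof.
  intros HT HK y. apply (riesz_representation (fun x => << y, T x >>)) with (K := nrm y * K).
  - intros x1 x2. rewrite (linear_add T HT), hinner_add_r. reflexivity.
  - intros a x. rewrite (linear_scal T HT), hinner_scal_r. reflexivity.
  - intros x. eapply Rle_trans; [apply cauchy_schwarz|]. rewrite Rmult_assoc.
    apply Rmult_le_compat_l; [apply hnorm_ge0 | apply HK].
Qed.

Lemma orthonormal_basis_hnorm v : orthonormal_basis H v -> forall i, nrm (v i) = 1.
Proof. intros [Hortho _] i. unfold hnorm. rewrite Hortho, Nat.eqb_refl. simpl. apply sqrt_1. Qed.

(* [z] is orthogonal to every finite combination [s] of the basis, so
   [nrm z ^ 2 = <<z, z - s>> <= nrm z * nrm (z - s)], which can be made arbitrarily small. *)
Lemma orthonormal_basis_orth_eq0 v z : orthonormal_basis H v ->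
  (forall i, << v i, z >> = C0) -> z = O.
Proof.
  intros [_ Hdense] Hz. apply hnorm_eq0.
  assert (Hsq : nrm z ^ 2 <= 0).
  { apply (le0_of_le_mult_eps _ (nrm z)); [apply hnorm_ge0|]. intros e He.
    destruct (Hdense z e He) as [N [c Hc]].
    set (s := hsum H N (fun n => c n *h v n)) in *.
    assert (Hzs : << z, s >> = C0).
    { unfold s. rewrite hinner_hsum. clear Hc. induction N as [|N IH]; simpl; [reflexivity|].
      rewrite IH, hinner_scal_r, hinner_conj, Hz. Cring. }
    assert (E : << z, z >> = << z, z -h s >>) by (rewrite hinner_sub_r, Hzs; Cring).
    rewrite hnorm_sq. unfold hnorm2. rewrite E.
    eapply Rle_trans; [apply Rle_abs|]. eapply Rle_trans; [apply Cmod_Re|].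
    eapply Rle_trans; [apply cauchy_schwarz|]. apply Rmult_le_compat_l; [apply hnorm_ge0 | lra]. }
  pose proof (hnorm_ge0 z). nra.
Qed.

Definition weakly_null (h : nat -> X) (eta : X) : Prop :=
  Un_cv (fun n => Cmod << eta, h n >>) 0.

Lemma weakly_null_closed_subspace (h : nat -> X) :
  (exists M, forall n, nrm (h n) <= M) -> closed_subspace (weakly_null h).
Proof.
  intros [M HM]. unfold weakly_null. repeat split.
  - apply (Un_cv0_squeeze _ (fun _ => 0)); [|apply Un_cv_const].
    intros n. rewrite hinner_0_l, Cmod_C0. lra.
  - intros x y Hx Hy. eapply Un_cv0_squeeze; [|exact (Un_cv0_plus _ _ Hx Hy)].
    intros n. rewrite hinner_add_l. split; [apply Cmod_ge0 | apply Cmod_add].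
  - intros a x Hx. eapply Un_cv0_squeeze; [|exact (Un_cv0_scal _ (Cmod a) Hx)].
    intros n. rewrite hinner_scal_l, Cmod_mul, Cmod_conj. split; [apply Rmult_le_pos; apply Cmod_ge0 | apply Rle_refl].
  - intros s x Hs Hc. apply Un_cv0_le; [intros; apply Cmod_ge0|]. intros e He.
    destruct (Un_cv0_lt _ (Un_cv0_scal _ M Hc) (e / 2)) as [K HK]; [lra|].
    specialize (HK K (le_n _)). simpl in HK.
    destruct (Un_cv0_lt _ (Hs K) (e / 2)) as [N HN]; [lra|].
    exists N. intros n Hn. specialize (HN n Hn).
    pose proof (hinner_sub_l_le (h n) x (s K)) as Hdiff. rewrite hnorm_sub_sym in Hdiff.
    pose proof (Cmod_sub_le << x, h n >> << s K, h n >>).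
    pose proof (Rmult_le_compat_l _ _ _ (hnorm_ge0 (s K -h x)) (HM n)). lra.
Qed.

Lemma compact_coordinatewise_cv0 (T : X -> X) v y (x : nat -> X) :
  compact_operator H T -> orthonormal_basis H v -> (exists M, forall n, nrm (x n) <= M) ->
  (forall i, Un_cv (fun n => Cmod << v i, y -h T (x n) >>) 0) ->
  Un_cv (fun n => nrm (y -h T (x n))) 0.
Proof.
  intros [_ Hcpt] Hv [M HM] Hcoord. apply NNPP. intros Hnot.
  destruct (not_Un_cv0_subseq _ Hnot) as [d [sg [Hd Hsg]]].
  destruct (Hcpt (fun k => x (sg k))) as [phi [Hphi [l Hl]]]; [exists M; intros; apply HM|].
  set (m := fun k => sg (phi k)).
  assert (Hm : forall k, (k <= m k)%nat).
  { intros k. pose proof (increasing_ge_id phi Hphi k). destruct (Hsg (phi k)). unfold m. lia. }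
  assert (Hyl : y = l).
  { apply hsub_eq0, (orthonormal_basis_orth_eq0 v _ Hv). intros i.
    apply Cmod_eq0, Rle_antisym; [|apply Cmod_ge0].
    apply (le0_of_le_Un_cv0 _ (fun k => Cmod << v i, y -h T (x (m k)) >> + nrm (T (x (m k)) -h l))).
    - intros k. pose proof (hinner_sub_r_le (v i) (y -h T (x (m k))) (y -h l)) as Hdiff.
      rewrite hsub_hsub_same_l, orthonormal_basis_hnorm, Rmult_1_l in Hdiff by exact Hv.
      pose proof (Cmod_sub_le << v i, y -h l >> << v i, y -h T (x (m k)) >>).
      rewrite Cmod_sub_sym, hnorm_sub_sym in Hdiff. lra.
    - apply Un_cv0_plus; [exact (Un_cv_subseq _ _ m (Hcoord i) Hm) | exact Hl]. }
  destruct (Un_cv0_lt _ Hl d Hd) as [N HN]. specialize (HN N (le_n _)). simpl in HN.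
  rewrite hnorm_sub_sym, <- Hyl in HN. destruct (Hsg (phi N)) as [_ HdN].
  rewrite Rabs_right in HdN by (apply Rle_ge, hnorm_ge0). unfold m in HN. lra.
Qed.

Lemma injective_image_cv0_weakly_null (T : X -> X) (K : R) (h : nat -> X) :
  is_linear H T -> (forall x, nrm (T x) <= K * nrm x) -> (forall x y, T x = T y -> x = y) ->
  (exists M, forall n, nrm (h n) <= M) -> Un_cv (fun n => nrm (T (h n))) 0 ->
  forall eta, weakly_null h eta.
Proof.
  intros HT HK Hinj Hh HTh.
  apply (closed_subspace_full _ (weakly_null_closed_subspace h Hh)).
  intros w Hw.
  destruct (bounded_operator_adjoint T K HT HK (T w)) as [r Hr].
  assert (Hrnull : weakly_null h r).
  { eapply Un_cv0_squeeze; [|exact (Un_cv0_scal _ (nrm (T w)) HTh)].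
    intros n. rewrite <- Hr. split; [apply Cmod_ge0 | apply cauchy_schwarz]. }
  specialize (Hw r Hrnull). rewrite <- Hr in Hw.
  apply hinner_def in Hw. rewrite <- (linear_0 T HT) in Hw. apply Hinj, Hw.
Qed.

End Hilbert.

Lemma Csum_ext N F G : (forall n, (n < N)%nat -> F n = G n) -> Csum N F = Csum N G.
Proof.
  induction N as [|N IH]; simpl; intros Hfg; [reflexivity|].
  rewrite IH, Hfg; [reflexivity | lia | intros; apply Hfg; lia].
Qed.

Lemma Cmod_le_CNnorm N y i : (i < N)%nat -> Cmod (y i) <= CNnorm N y.
Proof.
  intros Hi. unfold CNnorm. rewrite <- (sqrt_pow2 (Cmod (y i))) by apply Cmod_ge0.
  apply sqrt_le_1_alt. induction N as [|N IH]; [lia|]. cbn [Csum Cadd Re].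
  assert (Hnonneg : forall n, 0 <= Re (Csum n (fun i => mkC (Cmod (y i) ^ 2) 0))).
  { induction n as [|n IHn]; cbn [Csum Cadd Re C0]; [lra|]. pose proof (pow2_ge_0 (Cmod (y n))). lra. }
  destruct (Nat.eq_dec i N) as [->|Hne].
  - pose proof (Hnonneg N). lra.
  - pose proof (pow2_ge_0 (Cmod (y N))). specialize (IH ltac:(lia)). lra.
Qed.

Section Discretization.
Context {X : Type} (H : HilbertSpace X).

Lemma residual_eq (T : X -> X) u v g N x i : is_linear H T ->
  residual H T u v g N x i = Csub (hinner H (v i) (T (hat H u N x))) (hinner H (v i) g).
Proof.
  intros HT. unfold residual, hat, vecg. f_equal.
  rewrite (linear_hsum H T HT), hinner_hsum. apply Csum_ext. intros n _.
  rewrite (linear_scal H T HT), hinner_scal_r. unfold matA. Cring.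
Qed.

Lemma residual_cv0_coordinatewise (T : X -> X) u v g (x : nat -> nat -> Cplx) : is_linear H T ->
  Un_cv (fun N => CNnorm N (residual H T u v g N (x N))) 0 ->
  forall i, Un_cv (fun N => Cmod (hinner H (v i) (hsub H g (T (hat H u N (x N)))))) 0.
Proof.
  intros HT Hres i. apply Un_cv0_le; [intros; apply Cmod_ge0|]. intros e He.
  destruct (Un_cv0_lt _ Hres e He) as [N0 HN0]. exists (max N0 (S i)). intros N HN.
  rewrite hinner_sub_r, Cmod_sub_sym, <- residual_eq by exact HT.
  apply Rlt_le, Rle_lt_trans with (CNnorm N (residual H T u v g N (x N))).
  - apply Cmod_le_CNnorm. lia.
  - apply HN0. lia.
Qed.

End Discretization.

Theorem theorem3p2 (X : Type) (HX : HilbertSpace X)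
  (Hsep : separable HX) (Hinf : infinite_dimensional HX)
  (A : X -> X) (HA : compact_operator HX A)
  (Hinj : forall x y, A x = A y -> x = y)
  (g f : X) (Hf : A f = g)
  (u v : nat -> X) (Hu : orthonormal_basis HX u) (Hv : orthonormal_basis HX v)
  (fN : nat -> (nat -> Cplx))
  (Heps : Un_cv (fun N => CNnorm N (residual HX A u v g N (fN N))) 0)
  (Hbdd : exists M, forall N, hnorm HX (hat HX u N (fN N)) <= M) :
  Un_cv (fun N => hnorm HX (hsub HX g (A (hat HX u N (fN N))))) 0 /\
  (forall eta : X,
     Un_cv (fun N => Cmod (hinner HX eta (hsub HX f (hat HX u N (fN N))))) 0).
Proof.
  pose proof HA as [Hlin _].
  assert (Hnorm : Un_cv (fun N => hnorm HX (hsub HX g (A (hat HX u N (fN N))))) 0).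
  { apply compact_coordinatewise_cv0 with (v := v); try assumption.
    apply residual_cv0_coordinatewise; assumption. }
  split; [exact Hnorm|].
  destruct (compact_operator_bounded HX A HA) as [K HK].
  apply (injective_image_cv0_weakly_null HX A K); try assumption.
  - destruct Hbdd as [M HM]. exists (hnorm HX f + M). intros N.
    eapply Rle_trans; [apply hnorm_sub_le|]. specialize (HM N). lra.
  - eapply Un_cv_ext; [|exact Hnorm]. intros N. simpl. rewrite (linear_sub HX A Hlin), Hf. reflexivity.
Qed.
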